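(* Let $A\in\mathbb{H}^{m\times n}$ have full row rank ($m\le n$), let $\alpha\in(0,2/\|A\|_2^2)$, $0<\gamma\le1$, set $X_0=\alpha A^H$ and $X_{k+1}=(1+\gamma)X_k-\gamma X_kAX_k$ for $k\ge0$ (equivalently $X_{k+1}=X_k-\gamma X_k(AX_k-I_m)$). Let $E_k=I_m-AX_k$, $H_k=X_kA$, $F_k=I_n-X_kA$, and define $g_\gamma(t)=(1-\gamma)t+\gamma t^2$, $h_\gamma(t)=(1+\gamma)t-\gamma t^2$. Then: (1) $E_{k+1}=g_\gamma(E_k)$; hence $\|E_k\|_2$ decreases monotonically to $0$ and $AX_k\to I_m$. (2) $H_{k+1}=h_\gamma(H_k)$; each $H_k$ is Hermitian with spectrum in $[0,2)$ and $H_k\to Q:=A^\dagger A$, the orthogonal projector onto $\mathcal{R}(A^H)$. Consequently $F_k\to I_n-Q$. (3) The sequence $(X_k)$ converges in operator norm to $A^\dagger$.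
   Context: $\mathbb{H}$ denotes the real quaternions; $X^H=\overline{X}^\top$ is the quaternionic conjugate transpose; a matrix is Hermitian if $X=X^H$ (such matrices have real spectrum). $\|\cdot\|_2$ is the operator norm induced by the Euclidean norm $\|x\|_2=\sqrt{\mathrm{Re}\,x^Hx}$. $A^\dagger$ is the Moore–Penrose pseudoinverse: the unique $A^\dagger\in\mathbb{H}^{n\times m}$ with $AA^\dagger A=A$, $A^\dagger AA^\dagger=A^\dagger$, $(AA^\dagger)^H=AA^\dagger$, $(A^\dagger A)^H=A^\dagger A$. All products are quaternionic matrix products in the written order. *)

From HB Require Import structures.
From mathcomp Require Import all_boot all_order all_algebra.
From mathcomp Require Import ring lra.
From mathcomp Require Import all_classical all_reals all_analysis.
Set Implicit Arguments. Unset Strict Implicit. Unset Printing Implicit Defensive.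
Import Order.TTheory GRing.Theory Num.Theory.
Local Open Scope ring_scope.

Section Quaternions.
Variable R : realType.

Record quat := Quat { q0 : R; q1 : R; q2 : R; q3 : R }.

Definition quat2t (q : quat) := (q0 q, q1 q, q2 q, q3 q).
Definition t2quat (t : R * R * R * R) := let: (a, b, c, d) := t in Quat a b c d.
Lemma quat2tK : cancel quat2t t2quat. Proof. by case. Qed.
HB.instance Definition _ := Choice.copy quat (can_type quat2tK).

Definition qzero := Quat 0 0 0 0.
Definition qadd p q := Quat (q0 p + q0 q) (q1 p + q1 q) (q2 p + q2 q) (q3 p + q3 q).
Definition qopp p := Quat (- q0 p) (- q1 p) (- q2 p) (- q3 p).

Lemma qaddA : associative qadd.
Proof. by case=> ? ? ? ?[]? ? ? ?[]? ? ? ?; rewrite /qadd /= !addrA. Qed.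
Lemma qaddC : commutative qadd.
Proof. by case=> ? ? ? ?[]? ? ? ?; rewrite /qadd /= [in LHS]addrC [X in Quat _ X]addrC [X in Quat _ _ X]addrC [X in Quat _ _ _ X]addrC. Qed.
Lemma qadd0 : left_id qzero qadd.
Proof. by case=> ? ? ? ?; rewrite /qadd /= !add0r. Qed.
Lemma qaddN : left_inverse qzero qopp qadd.
Proof. by case=> ? ? ? ?; rewrite /qadd /= !addNr. Qed.

HB.instance Definition _ := GRing.isZmodule.Build quat qaddA qaddC qadd0 qaddN.

Definition qone := Quat 1 0 0 0.
(* Hamilton product, i^2 = j^2 = k^2 = ijk = -1 *)
Definition qmul p q := Quat
  (q0 p * q0 q - q1 p * q1 q - q2 p * q2 q - q3 p * q3 q)
  (q0 p * q1 q + q1 p * q0 q + q2 p * q3 q - q3 p * q2 q)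
  (q0 p * q2 q - q1 p * q3 q + q2 p * q0 q + q3 p * q1 q)
  (q0 p * q3 q + q1 p * q2 q - q2 p * q1 q + q3 p * q0 q).

Lemma qmulA : associative qmul.
Proof. by case=> ? ? ? ?[]? ? ? ?[]? ? ? ?; rewrite /qmul /=; congr Quat; ring. Qed.
Lemma qmul1 : left_id qone qmul.
Proof. by case=> ? ? ? ?; rewrite /qmul /=; congr Quat; ring. Qed.
Lemma qmulr1 : right_id qone qmul.
Proof. by case=> ? ? ? ?; rewrite /qmul /=; congr Quat; ring. Qed.
Lemma qmulDl : left_distributive qmul qadd.
Proof. by case=> ? ? ? ?[]? ? ? ?[]? ? ? ?; rewrite /qmul /qadd /=; congr Quat; ring. Qed.
Lemma qmulDr : right_distributive qmul qadd.
Proof. by case=> ? ? ? ?[]? ? ? ?[]? ? ? ?; rewrite /qmul /qadd /=; congr Quat; ring. Qed.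
Lemma qone_neq0 : qone != 0.
Proof. apply/eqP=> [[]] /eqP; by rewrite oner_eq0. Qed.

HB.instance Definition _ :=
  GRing.Zmodule_isNzRing.Build quat qmulA qmul1 qmulr1 qmulDl qmulDr qone_neq0.

Definition qconj q := Quat (q0 q) (- q1 q) (- q2 q) (- q3 q).
Definition qreal (r : R) := Quat r 0 0 0.
Definition qnorm2 q := q0 q ^+ 2 + q1 q ^+ 2 + q2 q ^+ 2 + q3 q ^+ 2.

Definition qis_real q := [/\ q1 q = 0, q2 q = 0 & q3 q = 0].

Definition hconj m n (X : 'M[quat]_(m, n)) : 'M[quat]_(n, m) :=
  \matrix_(i, j) qconj (X j i).

Definition qhermitian n (X : 'M[quat]_n) := hconj X = X.

Definition vnorm n (x : 'cV[quat]_n) : R := Num.sqrt (\sum_i qnorm2 (x i 0)).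

Definition opnorm m n (X : 'M[quat]_(m, n)) : R :=
  sup [set vnorm (X *m x) | x in [set x : 'cV[quat]_n | vnorm x = 1]].

Definition full_row_rank m n (A : 'M[quat]_(m, n)) :=
  forall v : 'rV[quat]_m, v *m A = 0 -> v = 0.

Definition is_pinv m n (A : 'M[quat]_(m, n)) (B : 'M[quat]_(n, m)) :=
  [/\ A *m B *m A = A, B *m A *m B = B,
      hconj (A *m B) = A *m B & hconj (B *m A) = B *m A].

Definition right_eigenvalue n (X : 'M[quat]_n) (lam : quat) :=
  exists2 x : 'cV[quat]_n, x != 0 & X *m x = x *m (lam%:M : 'M[quat]_1).

Definition g_mx n (gam : R) (E : 'M[quat]_n) : 'M[quat]_n :=
  qreal (1 - gam) *: E + qreal gam *: (E *m E).
Definition h_mx n (gam : R) (H : 'M[quat]_n) : 'M[quat]_n :=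
  qreal (1 + gam) *: H - qreal gam *: (H *m H).

End Quaternions.

(* The update gives A X_{k+1} = h(A X_k), and since
   g(1 - t) = 1 - h(t) this is E_{k+1} = g(E_k), so
   |E_{k+1}| <= |E_k| (1 - gam + gam |E_k|). For 0 < alpha < 2/|A|^2 and A of full
   row rank, |E_0| = |I - alpha A A^H| < 1, hence the residual norms decrease
   geometrically. Every X_k stays in the range of A^H, i.e. A^+ A X_k = X_k, so
   X_k - A^+ = - A^+ E_k and X_k A - A^+ A = (X_k - A^+) A tend to 0 as well.
   Finally X_k A is Hermitian, so its right eigenvalues lam are real; for an
   eigenvector x, either A x = 0 and lam = 0, or A x is an eigenvector of E_k for
   1 - lam, and |1 - lam| <= |E_k| < 1 puts lam in (0, 2). *)

From HB Require Import structures.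
From mathcomp Require Import all_boot all_order all_algebra.
From mathcomp Require Import all_classical all_reals all_analysis.
From mathcomp Require Import ring lra.
Import Order.TTheory GRing.Theory Num.Theory.
Import numFieldNormedType.Exports.
Local Open Scope classical_set_scope.
Local Open Scope ring_scope.
Set Implicit Arguments. Unset Strict Implicit. Unset Printing Implicit Defensive.

Ltac quat_ring := congr Quat => /=; ring.

Section QuaternionArithmetic.
Variable R : realType.
Implicit Types (p q : quat R) (r s : R).

Lemma qrealC r p : qreal r * p = p * qreal r. Proof. quat_ring. Qed.
Lemma qrealD r s : qreal (r + s) = qreal r + qreal s. Proof. quat_ring. Qed.
Lemma qrealB r s : qreal (r - s) = qreal r - qreal s. Proof. quat_ring. Qed.
Lemma qreal1 : qreal 1 = 1 :> quat R. Proof. by []. Qed.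

Lemma qconjD p q : qconj (p + q) = qconj p + qconj q. Proof. quat_ring. Qed.
Lemma qconjN p : qconj (- p) = - qconj p. Proof. quat_ring. Qed.
Lemma qconjM p q : qconj (p * q) = qconj q * qconj p. Proof. quat_ring. Qed.
Lemma qconjK p : qconj (qconj p) = p. Proof. by case: p => *; quat_ring. Qed.
Lemma qconj_nat k : qconj k%:R = k%:R :> quat R.
Proof. by elim: k => [|k IH]; [quat_ring | rewrite !mulrS qconjD IH; quat_ring]. Qed.
Lemma qconj_real r : qconj (qreal r) = qreal r. Proof. quat_ring. Qed.
Lemma qconj_sum (I : finType) (F : I -> quat R) :
  qconj (\sum_i F i) = \sum_i qconj (F i).
Proof. by apply: big_morph; [exact: qconjD | quat_ring]. Qed.

Lemma q0_realM r p : q0 (qreal r * p) = r * q0 p. Proof. rewrite /=; ring. Qed.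

Lemma qconjMq p : qconj p * p = qreal (qnorm2 p). Proof. rewrite /qnorm2; quat_ring. Qed.
Lemma qnorm2M p q : qnorm2 (p * q) = qnorm2 p * qnorm2 q.
Proof. rewrite /qnorm2 /=; ring. Qed.
Lemma qnorm2_ge0 p : 0 <= qnorm2 p.
Proof. by rewrite /qnorm2 !addr_ge0 ?sqr_ge0. Qed.
Lemma qnorm2_eq0 p : qnorm2 p = 0 -> p = 0.
Proof.
case: p => a b c d; rewrite /qnorm2 /= => norm0.
have [a0 b0 c0 d0] : [/\ a = 0, b = 0, c = 0 & d = 0] by split; nra.
by rewrite a0 b0 c0 d0.
Qed.

End QuaternionArithmetic.

Section ConjugateTranspose.
Variable R : realType.

Lemma hconjM m n p (X : 'M[quat R]_(m, n)) (Y : 'M[quat R]_(n, p)) :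
  hconj (X *m Y) = hconj Y *m hconj X.
Proof.
apply/matrixP=> i j; rewrite !mxE qconj_sum; apply: eq_bigr => l _.
by rewrite qconjM !mxE.
Qed.

Lemma hconjD m n (X Y : 'M[quat R]_(m, n)) : hconj (X + Y) = hconj X + hconj Y.
Proof. by apply/matrixP=> i j; rewrite !mxE qconjD. Qed.

Lemma hconjN m n (X : 'M[quat R]_(m, n)) : hconj (- X) = - hconj X.
Proof. by apply/matrixP=> i j; rewrite !mxE qconjN. Qed.

Lemma hconjB m n (X Y : 'M[quat R]_(m, n)) : hconj (X - Y) = hconj X - hconj Y.
Proof. by rewrite hconjD hconjN. Qed.

Lemma hconjK m n (X : 'M[quat R]_(m, n)) : hconj (hconj X) = X.
Proof. by apply/matrixP=> i j; rewrite !mxE qconjK. Qed.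

Lemma hconjZ m n (r : R) (X : 'M[quat R]_(m, n)) :
  hconj (qreal r *: X) = qreal r *: hconj X.
Proof. by apply/matrixP=> i j; rewrite !mxE qconjM qconj_real qrealC. Qed.

Lemma hconj1 n : hconj (1%:M : 'M[quat R]_n) = 1%:M.
Proof. by apply/matrixP=> i j; rewrite !mxE qconj_nat eq_sym. Qed.

Lemma qscalemxAr m n p (r : R) (X : 'M[quat R]_(m, n)) (Y : 'M[quat R]_(n, p)) :
  X *m (qreal r *: Y) = qreal r *: (X *m Y).
Proof.
apply/matrixP=> i j; rewrite !mxE mulr_sumr; apply: eq_bigr => l _.
by rewrite mxE mulrA -qrealC mulrA.
Qed.

Lemma mulmx_scalar_entry m n (Y : 'M[quat R]_(m, n)) (a : quat R) i j :
  (Y *m a%:M) i j = Y i j * a.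
Proof.
rewrite !mxE (bigD1 j) //= big1 ?addr0 => [|l /negbTE ne].
  by rewrite !mxE eqxx mulr1n.
by rewrite mxE ne mulr0n mulr0.
Qed.

Lemma mulmx_qreal_scalar m n (Y : 'M[quat R]_(m, n)) (r : R) :
  Y *m (qreal r)%:M = qreal r *: Y.
Proof. by apply/matrixP=> i j; rewrite mulmx_scalar_entry mxE qrealC. Qed.

End ConjugateTranspose.

Section EuclideanNorm.
Variables (R : realType) (n : nat).
Implicit Types (x y z : 'cV[quat R]_n) (r : R).

Definition vdot x y : R := q0 ((hconj x *m y) 0 0).

Lemma vdotC x y : vdot x y = vdot y x.
Proof. by rewrite /vdot -[in RHS](hconjK x) -hconjM [in RHS]mxE. Qed.

Lemma vdotDr x y z : vdot x (y + z) = vdot x y + vdot x z.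
Proof. by rewrite /vdot mulmxDr mxE. Qed.

Lemma vdotNr x y : vdot x (- y) = - vdot x y.
Proof. by rewrite /vdot mulmxN mxE. Qed.

Lemma vdotBr x y z : vdot x (y - z) = vdot x y - vdot x z.
Proof. by rewrite vdotDr vdotNr. Qed.

Lemma vdotZr r x y : vdot x (qreal r *: y) = r * vdot x y.
Proof. by rewrite /vdot qscalemxAr mxE q0_realM. Qed.

Lemma vdotDl x y z : vdot (x + y) z = vdot x z + vdot y z.
Proof. by rewrite vdotC vdotDr !(vdotC z). Qed.

Lemma vdotBl x y z : vdot (x - y) z = vdot x z - vdot y z.
Proof. by rewrite vdotC vdotBr !(vdotC z). Qed.

Lemma vdotZl r x y : vdot (qreal r *: x) y = r * vdot x y.
Proof. by rewrite vdotC vdotZr vdotC. Qed.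

Lemma hconj_mulmx_self x : (hconj x *m x) 0 0 = qreal (\sum_i qnorm2 (x i 0)).
Proof.
rewrite mxE (big_morph _ (@qrealD R) (erefl : qreal 0 = 0)).
by apply: eq_bigr => i _; rewrite mxE qconjMq.
Qed.

Lemma vdotxx x : vdot x x = \sum_i qnorm2 (x i 0).
Proof. by rewrite /vdot hconj_mulmx_self. Qed.

Lemma vdotxx_ge0 x : 0 <= vdot x x.
Proof. by rewrite vdotxx sumr_ge0 // => i _; apply: qnorm2_ge0. Qed.

Lemma vdotxx_eq0 x : vdot x x = 0 -> x = 0.
Proof.
rewrite vdotxx => sum0; apply/matrixP => i j; rewrite (ord1 j) mxE.
exact/qnorm2_eq0/(psumr_eq0P (fun l _ => qnorm2_ge0 _) sum0).
Qed.

Lemma vnorm_sq x : vnorm x ^+ 2 = vdot x x.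
Proof. by rewrite /vnorm -vdotxx sqr_sqrtr // vdotxx_ge0. Qed.

Lemma vnorm_ge0 x : 0 <= vnorm x.
Proof. exact: sqrtr_ge0. Qed.

Lemma vnorm_eq0 x : vnorm x = 0 -> x = 0.
Proof. by move=> x0; apply: vdotxx_eq0; rewrite -vnorm_sq x0 expr0n. Qed.

Lemma vnorm_gt0 x : x != 0 -> 0 < vnorm x.
Proof. by move=> /eqP x_neq0; rewrite lt_def vnorm_ge0 andbT; apply/eqP => /vnorm_eq0. Qed.

Lemma vnorm0 : vnorm (0 : 'cV[quat R]_n) = 0.
Proof. by rewrite /vnorm big1 ?sqrtr0 // => i _; rewrite mxE /qnorm2 /= expr0n !addr0. Qed.

Lemma vnormE x : vnorm x = Num.sqrt (vdot x x).
Proof. by rewrite vdotxx. Qed.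

Lemma vnormZ r x : vnorm (qreal r *: x) = `|r| * vnorm x.
Proof. by rewrite !vnormE vdotZl vdotZr mulrA -expr2 sqrtrM ?sqr_ge0 // sqrtr_sqr. Qed.

Lemma vnormN x : vnorm (- x) = vnorm x.
Proof. by rewrite !vnormE /vdot hconjN mulNmx mulmxN opprK. Qed.

Lemma vdot_le x y : vdot x y <= vnorm x * vnorm y.
Proof.
have [->|y_neq0] := eqVneq y 0; first by rewrite /vdot mulmx0 mxE vnorm0 mulr0.
set a := vdot y y; set b := vdot x y.
have a_gt0 : 0 < a by rewrite /a -vnorm_sq exprn_gt0 // vnorm_gt0.
have key : 0 <= a * (a * vdot x x - b ^+ 2).
  have := vdotxx_ge0 (qreal a *: x - qreal b *: y).
  by rewrite vdotBl !vdotBr !vdotZl !vdotZr (vdotC y x) -/a -/b; congr (_ <= _); ring.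
have b2 : b ^+ 2 <= (vnorm x * vnorm y) ^+ 2.
  by rewrite exprMn !vnorm_sq -/a mulrC -subr_ge0 -(pmulr_rge0 _ a_gt0).
have := mulr_ge0 (vnorm_ge0 x) (vnorm_ge0 y); nra.
Qed.

Lemma vnormD x y : vnorm (x + y) <= vnorm x + vnorm y.
Proof.
rewrite -ler_sqr ?nnegrE ?addr_ge0 ?vnorm_ge0 //.
rewrite sqrrD !vnorm_sq vdotDl !vdotDr (vdotC y x) -!vnorm_sq.
by have := vdot_le x y; lra.
Qed.

Lemma vnorm_sum (I : finType) (F : I -> 'cV[quat R]_n) :
  vnorm (\sum_i F i) <= \sum_i vnorm (F i).
Proof.
apply: (big_ind2 (fun u v => vnorm u <= v)) => [|u1 v1 u2 v2 h1 h2|//].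
  by rewrite vnorm0.
exact: le_trans (vnormD _ _) (lerD h1 h2).
Qed.

Lemma vnorm_entry x j : Num.sqrt (qnorm2 (x j 0)) <= vnorm x.
Proof.
rewrite /vnorm ler_sqrt; last by rewrite sumr_ge0 // => i _; apply: qnorm2_ge0.
by rewrite (bigD1 j) //= lerDl sumr_ge0 // => i _; apply: qnorm2_ge0.
Qed.

End EuclideanNorm.

Lemma vdot_mulmx (R : realType) m n (B : 'M[quat R]_(m, n)) x y :
  vdot x (B *m y) = vdot (hconj B *m x) y.
Proof. by rewrite /vdot hconjM hconjK mulmxA. Qed.

Section OperatorNorm.
Variable R : realType.

Lemma vnorm_mulmx_bounded m n (X : 'M[quat R]_(m, n)) :
  exists2 C, 0 <= C & forall x, vnorm (X *m x) <= C * vnorm x.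
Proof.
pose colnorm j := Num.sqrt (\sum_i qnorm2 (X i j)).
exists (\sum_j colnorm j) => [|x]; first by rewrite sumr_ge0 // => j _; apply: sqrtr_ge0.
pose v j : 'cV[quat R]_m := \col_i (X i j * x j 0).
have -> : X *m x = \sum_j v j.
  by apply/matrixP => i k; rewrite (ord1 k) !mxE summxE; apply: eq_bigr => j _; rewrite mxE.
apply: le_trans (vnorm_sum _) _; rewrite mulr_suml; apply: ler_sum => j _.
have -> : vnorm (v j) = colnorm j * Num.sqrt (qnorm2 (x j 0)).
  rewrite /vnorm -sqrtrM; last by rewrite sumr_ge0 // => i _; apply: qnorm2_ge0.
  by rewrite mulr_suml; congr Num.sqrt; apply: eq_bigr => i _; rewrite mxE qnorm2M.
by rewrite ler_wpM2l ?sqrtr_ge0 ?vnorm_entry.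
Qed.

Variables m n : nat.
Implicit Types X Y : 'M[quat R]_(m, n).

Let unit_image X := [set vnorm (X *m x) | x in [set x : 'cV[quat R]_n | vnorm x = 1]].

Lemma opnorm_ub X x : vnorm (X *m x) <= opnorm X * vnorm x.
Proof.
have [->|x_neq0] := eqVneq x 0; first by rewrite mulmx0 !vnorm0 mulr0.
have x_gt0 := vnorm_gt0 x_neq0.
set u := qreal (vnorm x)^-1 *: x.
have u1 : vnorm u = 1 by rewrite vnormZ gtr0_norm ?invr_gt0 // mulVf ?gt_eqF.
have [C C_ge0 XC] := vnorm_mulmx_bounded X.
have sup_ub : has_sup (unit_image X).
  split; first by exists (vnorm (X *m u)), u.
  by exists C => _ [y /= y1 <-]; rewrite -[C]mulr1 -y1 XC.
have := sup_upper_bound sup_ub (ex_intro2 _ _ u u1 erefl).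
rewrite qscalemxAr vnormZ gtr0_norm ?invr_gt0 // -ler_pdivlMl ?invr_gt0 //.
by rewrite invrK mulrC.
Qed.

(* Only for n = 0, where the unit sphere is empty and [sup set0 = 0]. *)
Let opnorm_unit_image0 X : ~ (unit_image X !=set0) -> opnorm X = 0.
Proof.
move=> empty; rewrite /opnorm -/(unit_image X).
suff -> : unit_image X = set0 by rewrite sup0.
by apply/seteqP; split => // y Sy; apply: empty; exists y.
Qed.

Lemma opnorm_le X c :
  0 <= c -> (forall x, vnorm (X *m x) <= c * vnorm x) -> opnorm X <= c.
Proof.
move=> c_ge0 Xc; have [[y Sy]|/opnorm_unit_image0 -> //] := pselect (unit_image X !=set0).
by apply: ge_sup => [|_ [x /= x1 <-]]; [exists y | rewrite -[c]mulr1 -x1 Xc].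
Qed.

Lemma opnorm_ge0 X : 0 <= opnorm X.
Proof.
have [[_ [x /= x1 _]]|/opnorm_unit_image0 -> //] := pselect (unit_image X !=set0).
by rewrite -[opnorm X]mulr1 -x1; apply: le_trans (vnorm_ge0 _) (opnorm_ub X x).
Qed.

Lemma opnormD X Y : opnorm (X + Y) <= opnorm X + opnorm Y.
Proof.
apply: opnorm_le => [|x]; first by rewrite addr_ge0 ?opnorm_ge0.
rewrite mulmxDl mulrDl; apply: le_trans (vnormD _ _) _.
exact: lerD (opnorm_ub _ _) (opnorm_ub _ _).
Qed.

Lemma opnormN X : opnorm (- X) = opnorm X.
Proof.
suff opnormN_le Y : opnorm (- Y) <= opnorm Y.
  by apply/le_anti; rewrite opnormN_le -[X in opnorm X <= _]opprK opnormN_le.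
apply: opnorm_le => [|x]; first exact: opnorm_ge0.
by rewrite mulNmx vnormN opnorm_ub.
Qed.

Lemma opnormZ (r : R) X : opnorm (qreal r *: X) <= `|r| * opnorm X.
Proof.
apply: opnorm_le => [|x]; first by rewrite mulr_ge0 ?opnorm_ge0.
by rewrite -scalemxAl vnormZ -mulrA ler_wpM2l ?opnorm_ub.
Qed.

End OperatorNorm.

Lemma opnormM (R : realType) m n p (X : 'M[quat R]_(m, n)) (Y : 'M[quat R]_(n, p)) :
  opnorm (X *m Y) <= opnorm X * opnorm Y.
Proof.
apply: opnorm_le => [|x]; first by rewrite mulr_ge0 ?opnorm_ge0.
rewrite -mulmxA -mulrA; apply: le_trans (opnorm_ub _ _) _.
by rewrite ler_wpM2l ?opnorm_ge0 ?opnorm_ub.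
Qed.

Section StepAlgebra.
Variables (R : realType) (gam : R).

Lemma mulmx_step_l m n (A : 'M[quat R]_(m, n)) (Y : 'M[quat R]_(n, m)) :
  A *m (qreal (1 + gam) *: Y - qreal gam *: (Y *m A *m Y)) = h_mx gam (A *m Y).
Proof. by rewrite /h_mx mulmxBr !qscalemxAr !mulmxA. Qed.

Lemma mulmx_step_r m n (A : 'M[quat R]_(m, n)) (Y : 'M[quat R]_(n, m)) :
  (qreal (1 + gam) *: Y - qreal gam *: (Y *m A *m Y)) *m A = h_mx gam (Y *m A).
Proof. by rewrite /h_mx mulmxBl -!scalemxAl !mulmxA. Qed.

Lemma g_mx_1B n (P : 'M[quat R]_n) : g_mx gam (1%:M - P) = 1%:M - h_mx gam P.
Proof.
rewrite /g_mx /h_mx mulmxBl !mulmxBr !mul1mx mulmx1.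
move: 1%:M (P *m P) => I PP; apply/matrixP => i j; rewrite !mxE; quat_ring.
Qed.

Lemma hconj_h_mx n (P : 'M[quat R]_n) : hconj (h_mx gam P) = h_mx gam (hconj P).
Proof. by rewrite /h_mx hconjB !hconjZ hconjM. Qed.

Lemma opnorm_g_mx_le n (E : 'M[quat R]_n) :
  0 <= gam <= 1 -> opnorm (g_mx gam E) <= opnorm E * (1 - gam + gam * opnorm E).
Proof.
case/andP => gam_ge0 gam_le1; apply: le_trans (opnormD _ _) _.
have -> : opnorm E * (1 - gam + gam * opnorm E)
          = (1 - gam) * opnorm E + gam * (opnorm E * opnorm E) by ring.
apply: lerD; apply: le_trans (opnormZ _ _) _; rewrite ger0_norm ?subr_ge0 //.
by rewrite ler_wpM2l ?opnormM.
Qed.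

End StepAlgebra.

Section PseudoInverse.
Variables (R : realType) (m n : nat) (A : 'M[quat R]_(m, n)) (Adag : 'M[quat R]_(n, m)).

Lemma full_row_rank_pinv_rinv : full_row_rank A -> A *m Adag *m A = A -> A *m Adag = 1%:M.
Proof.
move=> A_frr AAdagA; apply/eqP; rewrite -subr_eq0; apply/eqP/row_matrixP => i.
by rewrite row0; apply: A_frr; rewrite -row_mul mulmxBl AAdagA mul1mx subrr row0.
Qed.

Hypothesis A_pinv : is_pinv A Adag.

Lemma pinv_proj_hconj : Adag *m A *m hconj A = hconj A.
Proof.
by case: A_pinv => AAdagA _ _ AdagA_herm; rewrite -{1}AdagA_herm -hconjM mulmxA AAdagA.
Qed.

Lemma pinv_range_projector :
  [/\ Adag *m A *m (Adag *m A) = Adag *m A, qhermitian (Adag *m A)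
    & forall y : 'cV_n, (exists z : 'cV_m, y = hconj A *m z) <-> Adag *m A *m y = y].
Proof.
case: A_pinv => _ AdagAAdag _ AdagA_herm; split => // [|y].
  by rewrite mulmxA AdagAAdag.
split => [[z ->]|Qy]; first by rewrite mulmxA pinv_proj_hconj.
by exists (hconj Adag *m y); rewrite mulmxA -hconjM AdagA_herm Qy.
Qed.

End PseudoInverse.

Lemma opnorm_lt1 (R : realType) m n (M : 'M[quat R]_(m, n)) (t : R) :
  0 < t -> (forall x, vnorm (M *m x) ^+ 2 <= (1 - t) * vnorm x ^+ 2) -> opnorm M < 1.
Proof.
move=> t_gt0 Mt; set c := Num.sqrt (Num.max 0 (1 - t)).
have c2 : 1 - t <= c ^+ 2 by rewrite sqr_sqrtr ?le_max ?lexx // orbT.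
apply: (@le_lt_trans _ _ c); last first.
  by rewrite -sqrtr1 ltr_sqrt // gt_max ltr01 gtrBl.
apply: opnorm_le => [|x]; first exact: sqrtr_ge0.
rewrite -ler_sqr ?nnegrE ?mulr_ge0 ?sqrtr_ge0 ?vnorm_ge0 // exprMn.
by apply: le_trans (Mt x) _; rewrite ler_wpM2r ?sqr_ge0.
Qed.

Section InitialResidual.
Variables (R : realType) (m n : nat) (A : 'M[quat R]_(m, n)) (alpha : R).

Lemma vnorm_initial_residual_sq x :
  vnorm ((1%:M - qreal alpha *: (A *m hconj A)) *m x) ^+ 2
  <= vnorm x ^+ 2 - alpha * (2 - alpha * opnorm A ^+ 2) * vnorm (hconj A *m x) ^+ 2.
Proof.
set w := hconj A *m x.
have -> : (1%:M - qreal alpha *: (A *m hconj A)) *m x = x - qreal alpha *: (A *m w).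
  by rewrite mulmxBl mul1mx -scalemxAl mulmxA.
rewrite !vnorm_sq vdotBl !vdotBr !vdotZl !vdotZr (vdotC (A *m w) x) vdot_mulmx -/w.
rewrite -!vnorm_sq.
have Aw : vnorm (A *m w) ^+ 2 <= opnorm A ^+ 2 * vnorm w ^+ 2.
  by rewrite -exprMn ler_sqr ?nnegrE ?mulr_ge0 ?opnorm_ge0 ?vnorm_ge0 ?opnorm_ub.
have := ler_wpM2l (sqr_ge0 alpha) Aw; lra.
Qed.

Lemma opnorm_initial_residual_lt1 (B : 'M[quat R]_(n, m)) :
  A *m B = 1%:M -> 0 < alpha -> alpha < 2 / opnorm A ^+ 2 ->
  opnorm (1%:M - qreal alpha *: (A *m hconj A)) < 1.
Proof.
move=> AB alpha_gt0 alpha_lt.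
have a_gt0 : 0 < opnorm A ^+ 2.
  rewrite lt_def sqr_ge0 andbT sqrf_eq0; apply/eqP => a0.
  by move: alpha_lt; rewrite a0 expr0n /= invr0 mulr0 ltNge ltW.
set delta := alpha * (2 - alpha * opnorm A ^+ 2).
have delta_gt0 : 0 < delta by rewrite mulr_gt0 // subr_gt0 -ltr_pdivlMr.
(* x = B^H A^H x, so |x| <= K |A^H x|; the + 1 keeps K positive. *)
set K := opnorm (hconj B) + 1.
have K_gt0 : 0 < K by rewrite ltr_wpDl ?opnorm_ge0.
apply: (@opnorm_lt1 _ _ _ _ (delta / K ^+ 2)) => [|x]; first by rewrite divr_gt0 ?exprn_gt0.
set w := hconj A *m x.
have x_le : vnorm x ^+ 2 <= K ^+ 2 * vnorm w ^+ 2.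
  have -> : x = hconj B *m w by rewrite mulmxA -hconjM AB hconj1 mul1mx.
  rewrite -exprMn ler_sqr ?nnegrE ?mulr_ge0 ?vnorm_ge0 ?(ltW K_gt0) //.
  by apply: le_trans (opnorm_ub _ _) _; rewrite ler_wpM2r ?vnorm_ge0 ?lerDl.
apply: le_trans (vnorm_initial_residual_sq x) _; rewrite -/delta -/w.
have : delta / K ^+ 2 * vnorm x ^+ 2 <= delta * vnorm w ^+ 2.
  rewrite mulrAC ler_pdivrMr ?exprn_gt0 //.
  have := ler_wpM2l (ltW delta_gt0) x_le; lra.
lra.
Qed.

End InitialResidual.

Section ContractingSequence.
Variables (R : realType) (e : nat -> R) (gam : R).
Hypotheses (gam_gt0 : 0 < gam) (gam_le1 : gam <= 1).
Hypotheses (e_ge0 : forall k, 0 <= e k) (e0_lt1 : e 0%N < 1).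
Hypothesis e_rec : forall k, e k.+1 <= e k * (1 - gam + gam * e k).

Let factor_ge0 k : 0 <= 1 - gam + gam * e k.
Proof. by rewrite addr_ge0 ?subr_ge0 ?mulr_ge0 ?e_ge0 ?(ltW gam_gt0). Qed.

Let factor_le1 k : e k <= 1 -> 1 - gam + gam * e k <= 1.
Proof.
by move=> ek1; rewrite -addrA gerDl addrC subr_le0 -[leRHS]mulr1 ler_wpM2l ?(ltW gam_gt0).
Qed.

Let step_le k : e k <= 1 -> e k.+1 <= e k.
Proof. by move=> /factor_le1 f1; apply: le_trans (e_rec k) (ler_piMr (e_ge0 k) f1). Qed.

Lemma contracting_le_init k : e k <= e 0%N.
Proof. elim: k => [//|k IH]; exact: le_trans (step_le (le_trans IH (ltW e0_lt1))) IH. Qed.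

Lemma contracting_nonincreasing k : e k.+1 <= e k.
Proof. exact/step_le/(le_trans (contracting_le_init k))/ltW. Qed.

Lemma contracting_geometric :
  exists2 c, 0 <= c < 1 & forall k, e k <= e 0%N * c ^+ k.
Proof.
exists (1 - gam + gam * e 0%N).
  by rewrite factor_ge0 -addrA gtrDl addrC subr_lt0 -[ltRHS]mulr1 ltr_pM2l.
elim=> [|k IH]; first by rewrite mulr1.
apply: le_trans (e_rec k) _; rewrite exprSr mulrA.
apply: ler_pM; rewrite ?e_ge0 ?factor_ge0 //.
by rewrite lerD2l ler_wpM2l ?(ltW gam_gt0) ?contracting_le_init.
Qed.

End ContractingSequence.

Lemma geometric_squeeze (R : realType) (u : nat -> R) (C c : R) :
  0 <= c < 1 -> (forall k, 0 <= u k <= C * c ^+ k) -> u @ \oo --> 0.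
Proof.
case/andP => c_ge0 c_lt1 u_bound.
apply: (@squeeze_cvgr _ _ _ _ (fun=> 0) (geometric C c)); last 2 first.
- exact: cvg_cst.
- by apply: cvg_geometric; rewrite ger0_norm.
by near=> k; apply: u_bound.
Unshelve. all: by end_near.
Qed.

Lemma hermitian_right_eigenvalue_real (R : realType) n (B : 'M[quat R]_n) lam :
  qhermitian B -> right_eigenvalue B lam -> qis_real lam.
Proof.
move=> B_herm [x x_neq0 Bx].
have xBx_herm : hconj (hconj x *m B *m x) = hconj x *m B *m x.
  by rewrite !hconjM hconjK B_herm mulmxA.
have xBx : (hconj x *m B *m x) 0 0 = qreal (vdot x x) * lam.
  by rewrite -mulmxA Bx mulmxA mulmx_scalar_entry hconj_mulmx_self vdotxx.
have N_gt0 : 0 < vdot x x by rewrite -vnorm_sq exprn_gt0 ?vnorm_gt0.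
have := congr1 (fun M : 'M[quat R]_1 => M 0 0) xBx_herm; rewrite /= mxE xBx.
move: (vdot x x) N_gt0; clear Bx xBx; case: lam => a b c d N N_gt0 conj_eq.
have := congr1 (@q1 R) conj_eq; have := congr1 (@q2 R) conj_eq.
have := congr1 (@q3 R) conj_eq; rewrite /= => e3 e2 e1.
by split => /=; nra.
Qed.

Lemma real_quatE (R : realType) (lam : quat R) : qis_real lam -> lam = qreal (q0 lam).
Proof. by case: lam => a b c d [/= -> -> ->]. Qed.

Lemma right_eigenvalue_mulmx_range (R : realType) m n
    (A : 'M[quat R]_(m, n)) (Y : 'M[quat R]_(n, m)) (l : R) :
  opnorm (1%:M - A *m Y) < 1 -> right_eigenvalue (Y *m A) (qreal l) -> 0 <= l < 2.
Proof.
move=> E_lt1 [x x_neq0]; rewrite mulmx_qreal_scalar => YAx.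
have [Ax0|Ax_neq0] := eqVneq (A *m x) 0.
  have : vnorm (qreal l *: x) = 0 by rewrite -YAx -mulmxA Ax0 mulmx0 vnorm0.
  rewrite vnormZ => /eqP; rewrite mulf_eq0 normr_eq0 (gt_eqF (vnorm_gt0 x_neq0)) orbF.
  by move=> /eqP ->; rewrite lexx ltr0n.
have Ey : (1%:M - A *m Y) *m (A *m x) = qreal (1 - l) *: (A *m x).
  by rewrite mulmxBl mul1mx -mulmxA (mulmxA Y) YAx qscalemxAr qrealB qreal1 scalerBl scale1r.
have := opnorm_ub (1%:M - A *m Y) (A *m x); rewrite Ey vnormZ => Ey_le.
have : `|1 - l| * vnorm (A *m x) < 1 * vnorm (A *m x).
  by rewrite mul1r; apply: le_lt_trans Ey_le _; rewrite gtr_pMl ?vnorm_gt0.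
by rewrite ltr_pM2r ?vnorm_gt0 // ltr_norml => /andP[? ?]; apply/andP; split; lra.
Qed.

Section Iteration.
Variables (R : realType) (m n : nat) (A : 'M[quat R]_(m, n)) (Adag : 'M[quat R]_(n, m)).
Variables (alpha gam : R) (X : nat -> 'M[quat R]_(n, m)).
Hypotheses (A_frr : full_row_rank A) (A_pinv : is_pinv A Adag).
Hypotheses (alpha_gt0 : 0 < alpha) (alpha_lt : alpha < 2 / opnorm A ^+ 2).
Hypotheses (gam_gt0 : 0 < gam) (gam_le1 : gam <= 1).
Hypothesis X0 : X 0%N = qreal alpha *: hconj A.
Hypothesis XS :
  forall k, X k.+1 = qreal (1 + gam) *: X k - qreal gam *: (X k *m A *m X k).

Local Notation E k := (1%:M - A *m X k).

Lemma residual_succ k : E k.+1 = g_mx gam (E k).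
Proof. by rewrite XS mulmx_step_l g_mx_1B. Qed.

Lemma XA_succ k : X k.+1 *m A = h_mx gam (X k *m A).
Proof. by rewrite XS mulmx_step_r. Qed.

Lemma XA_hermitian k : qhermitian (X k *m A).
Proof.
rewrite /qhermitian; elim: k => [|k IH]; last by rewrite XA_succ hconj_h_mx IH.
by rewrite X0 -scalemxAl hconjZ hconjM hconjK.
Qed.

Lemma pinv_proj_X k : Adag *m A *m X k = X k.
Proof.
elim: k => [|k IH]; first by rewrite X0 qscalemxAr pinv_proj_hconj.
by rewrite XS mulmxBr !qscalemxAr !mulmxA IH.
Qed.

Lemma X_sub_pinv k : X k - Adag = - (Adag *m E k).
Proof. by rewrite mulmxBr mulmx1 mulmxA pinv_proj_X opprB. Qed.

Let residual_ge0 k : 0 <= opnorm (E k).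
Proof. exact: opnorm_ge0. Qed.

Let residual0_lt1 : opnorm (E 0%N) < 1.
Proof.
case: A_pinv => AAdagA _ _ _; rewrite X0 qscalemxAr.
exact: opnorm_initial_residual_lt1 (full_row_rank_pinv_rinv A_frr AAdagA) _ _.
Qed.

Let residual_rec k : opnorm (E k.+1) <= opnorm (E k) * (1 - gam + gam * opnorm (E k)).
Proof. by rewrite residual_succ opnorm_g_mx_le // ltW. Qed.

Lemma opnorm_residual_nonincreasing k : opnorm (E k.+1) <= opnorm (E k).
Proof. exact: (@contracting_nonincreasing _ (fun k => opnorm (E k)) gam). Qed.

Lemma opnorm_residual_lt1 k : opnorm (E k) < 1.
Proof.
apply: le_lt_trans residual0_lt1.
exact: (@contracting_le_init _ (fun k => opnorm (E k)) gam).
Qed.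

Lemma cvg_opnorm_residual_le p q (Y : nat -> 'M[quat R]_(p, q)) (C : R) :
  0 <= C -> (forall k, opnorm (Y k) <= C * opnorm (E k)) ->
  (fun k => opnorm (Y k)) @ \oo --> 0.
Proof.
move=> C_ge0 YC; have [c c01 Ec] := @contracting_geometric _ (fun k => opnorm (E k)) gam
  gam_gt0 gam_le1 residual_ge0 residual0_lt1 residual_rec.
apply: (@geometric_squeeze _ _ (C * opnorm (E 0%N)) _ c01) => k.
by rewrite opnorm_ge0 -mulrA (le_trans (YC k)) // ler_wpM2l.
Qed.

Lemma cvg_opnorm_residual : (fun k => opnorm (E k)) @ \oo --> 0.
Proof. by apply: (@cvg_opnorm_residual_le _ _ _ 1) => // k; rewrite mul1r. Qed.

Lemma cvg_opnorm_AX_sub1 : (fun k => opnorm (A *m X k - 1%:M)) @ \oo --> 0.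
Proof. by apply: (@cvg_opnorm_residual_le _ _ _ 1) => // k; rewrite -opprB opnormN mul1r. Qed.

Lemma cvg_opnorm_X_sub_pinv : (fun k => opnorm (X k - Adag)) @ \oo --> 0.
Proof.
apply: (@cvg_opnorm_residual_le _ _ _ (opnorm Adag)) => [|k]; first exact: opnorm_ge0.
by rewrite X_sub_pinv opnormN opnormM.
Qed.

Lemma cvg_opnorm_XA_sub_proj : (fun k => opnorm (X k *m A - Adag *m A)) @ \oo --> 0.
Proof.
apply: (@cvg_opnorm_residual_le _ _ _ (opnorm Adag * opnorm A)) => [|k].
  by rewrite mulr_ge0 ?opnorm_ge0.
rewrite -mulmxBl X_sub_pinv mulNmx opnormN mulrAC.
by apply: le_trans (opnormM _ _) _; rewrite ler_wpM2r ?opnorm_ge0 ?opnormM.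
Qed.

Lemma XA_spectrum k lam :
  right_eigenvalue (X k *m A) lam -> qis_real lam /\ 0 <= q0 lam < 2.
Proof.
move=> eig; have lam_real := hermitian_right_eigenvalue_real (XA_hermitian k) eig.
split => //; rewrite (real_quatE lam_real) in eig.
exact: right_eigenvalue_mulmx_range (opnorm_residual_lt1 k) eig.
Qed.

End Iteration.

Theorem mainTheorem4 (R : realType) (m n : nat)
  (A : 'M[quat R]_(m, n)) (Adag : 'M[quat R]_(n, m))
  (alpha gam : R) (X : nat -> 'M[quat R]_(n, m)) :
  (m <= n)%N ->
  full_row_rank A ->
  is_pinv A Adag ->
  0 < alpha -> alpha < 2 / (opnorm A ^+ 2) ->
  0 < gam -> gam <= 1 ->
  X 0%N = qreal alpha *: hconj A ->
  (forall k : nat, X k.+1 = qreal (1 + gam) *: X k - qreal gam *: (X k *m A *m X k)) ->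
  let E := fun k : nat => 1%:M - A *m X k in
  let H := fun k : nat => X k *m A in
  let F := fun k : nat => 1%:M - X k *m A in
  let Q := Adag *m A in
  (* (1) *)
  ((forall k : nat, E k.+1 = g_mx gam (E k)) /\
   (forall k : nat, opnorm (E k.+1) <= opnorm (E k)) /\
   ((fun k : nat => opnorm (E k)) @ \oo --> (0 : R)) /\
   ((fun k : nat => opnorm (A *m X k - 1%:M)) @ \oo --> (0 : R))) /\
  (* (2) *)
  ((forall k : nat, H k.+1 = h_mx gam (H k)) /\
   (forall k : nat, qhermitian (H k)) /\
   (forall (k : nat) (lam : quat R), right_eigenvalue (H k) lam ->
      qis_real lam /\ 0 <= q0 lam < 2) /\
   ((fun k : nat => opnorm (H k - Q)) @ \oo --> (0 : R)) /\
   (Q *m Q = Q /\ qhermitian Q /\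
    forall y : 'cV[quat R]_n,
      (exists z : 'cV[quat R]_m, y = hconj A *m z) <-> Q *m y = y) /\
   ((fun k : nat => opnorm (F k - (1%:M - Q))) @ \oo --> (0 : R))) /\
  (* (3) *)
  ((fun k : nat => opnorm (X k - Adag)) @ \oo --> (0 : R)).
Proof.
move=> _ A_frr A_pinv alpha_gt0 alpha_lt gam_gt0 gam_le1 X0 XS E H F Q.
have [QQ Q_herm Q_range] := pinv_range_projector A_pinv.
have F_sub k : F k - (1%:M - Q) = - (H k - Q).
  by rewrite /F /H [1%:M - _]addrC addrKA opprD.
have XA_cvg := cvg_opnorm_XA_sub_proj A_frr A_pinv alpha_gt0 alpha_lt gam_gt0 gam_le1 X0 XS.
(* [repeat split] would also try to close the matrix equations by conversion. *)
repeat match goal with |- _ /\ _ => split end.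
- exact: residual_succ XS.
- exact: opnorm_residual_nonincreasing A_frr A_pinv alpha_gt0 alpha_lt gam_gt0 gam_le1 X0 XS.
- exact: cvg_opnorm_residual A_frr A_pinv alpha_gt0 alpha_lt gam_gt0 gam_le1 X0 XS.
- exact: cvg_opnorm_AX_sub1 A_frr A_pinv alpha_gt0 alpha_lt gam_gt0 gam_le1 X0 XS.
- exact: XA_succ XS.
- exact: XA_hermitian X0 XS.
- exact: XA_spectrum A_frr A_pinv alpha_gt0 alpha_lt gam_gt0 gam_le1 X0 XS.
- exact: XA_cvg.
- exact: QQ.
- exact: Q_herm.
- exact: Q_range.
- by under eq_fun do rewrite F_sub opnormN.
- exact: cvg_opnorm_X_sub_pinv A_frr A_pinv alpha_gt0 alpha_lt gam_gt0 gam_le1 X0 XS.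
Qed.
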